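(* For each hybrid knowledge base with function symbols $\mathcal{K}$, the operator $\mathrm{IFP}_{\mathcal{K}}$ defined by $\mathrm{IFP}_{\mathcal{K}}(\mathcal{I})=\langle \mathrm{lfp}(T^{\mathcal{K}}_{\mathcal{I}}),\ \mathrm{gfp}(F^{\mathcal{K}}_{\mathcal{I}})\rangle$ on 3-valued interpretations $\mathcal{I}$ for $\mathcal{K}$ is monotonic with respect to $\le$: if $\mathcal{I}\le\mathcal{I}'$ then $\mathrm{IFP}_{\mathcal{K}}(\mathcal{I})\le\mathrm{IFP}_{\mathcal{K}}(\mathcal{I}')$.
   Context: A hybrid knowledge base with function symbols (HKBFS) is a pair $\mathcal{K}=\langle\mathcal{O},\mathcal{P}\rangle$ where $\mathcal{O}$ is a set of description logic axioms (e.g. in $\mathcal{ALC}$) and $\mathcal{P}$ is a finite set of normal logic programming rules $h\leftarrow a_1,\dots,a_n,\mathit{not}\,b_1,\dots,\mathit{not}\,b_r$ whose terms may contain function symbols. The grounding of $\mathcal{P}$ replaces variables of each rule by ground terms (built from the constants and function symbols of $\mathcal{K}$) in all possible ways. $\mathrm{KA}(\mathcal{K})$ is the set of ground atoms occurring in the grounding of $\mathcal{P}$. $\pi(\mathcal{O})$ is the standard first-order translation of the DL axioms, and $O_{\mathcal{K},S}=\{\pi(\mathcal{O})\}\cup S$ for $S\subseteq\mathrm{KA}(\mathcal{K})$; $\models$ is first-order entailment. A 3-valued interpretation for $\mathcal{K}$ is a pair $\langle I_T,I_F\rangle$ of disjoint subsets of $\mathrm{KA}(\mathcal{K})$; $a$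 is true in it if $a\in I_T$, false if $a\in I_F$, undefined otherwise; $\langle I_T,I_F\rangle\le\langle I_T',I_F'\rangle$ iff $I_T\subseteq I_T'$ and $I_F\subseteq I_F'$. For $\mathcal{I}=\langle I_T,I_F\rangle$, the operators on subsets of $\mathrm{KA}(\mathcal{K})$ are: $T^{\mathcal{K}}_{\mathcal{I}}(Tr)=\{a\in\mathrm{KA}(\mathcal{K})\mid$ there is a clause $a\leftarrow a_1,\dots,a_n,\mathit{not}\,b_1,\dots,\mathit{not}\,b_r$ in the grounding of $\mathcal{P}$ such that each $a_i$ is true in $\mathcal{I}$ or $a_i\in Tr$, and each $b_j$ is false in $\mathcal{I}\}\cup\{a\in\mathrm{KA}(\mathcal{K})\mid O_{\mathcal{K},I_T\cup Tr}\models a\}$; $F^{\mathcal{K}}_{\mathcal{I}}(Fa)=\{a\in\mathrm{KA}(\mathcal{K})\mid O_{\mathcal{K},I_T}\models\neg a$, or for every clause $a\leftarrow a_1,\dots,a_n,\mathit{not}\,b_1,\dots,\mathit{not}\,b_r$ in the grounding of $\mathcal{P}$ there is some $i$ with $a_i$ false in $\mathcal{I}$ or $a_i\in Fa$, or some $j$ with $b_j$ true in $\mathcal{I}\}\cap\{a\in\mathrm{KA}(\mathcal{K})\mid O_{\mathcal{K},\mathrm{KA}(\mathcal{K})\setminus(I_F\cup Fa)}\not\models a\}$. Both operators are monotonic in their argument (w.r.t. set inclusion), so $\mathrm{lfp}(T^{\mathcal{K}}_{\mathcal{I}})$ (least fixpoint) and $\mathrm{gfp}(F^{\mathcal{K}}_{\mathcal{I}})$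 (greatest fixpoint) exist. *)

From Stdlib Require Import List.
Import ListNotations.

(* Variables, function symbols (constants = 0-ary function symbols) and
   predicate symbols are named by natural numbers. *)
Inductive term : Type :=
| Var : nat -> term
| Fn  : nat -> list term -> term.

Record atom : Type := mkAtom { pred : nat ; args : list term }.

Fixpoint subst (s : nat -> term) (t : term) : term :=
  match t with
  | Var v => s v
  | Fn f l => Fn f (map (subst s) l)
  end.

Definition subst_atom (s : nat -> term) (a : atom) : atom :=
  mkAtom (pred a) (map (subst s) (args a)).

Inductive var_occ (v : nat) : term -> Prop :=
| vo_here : var_occ v (Var v)
| vo_sub : forall g l t, In t l -> var_occ v t -> var_occ v (Fn g l).

Inductive sym_occ (f n : nat) : term -> Prop :=
| so_here : forall l, length l = n -> sym_occ f n (Fn f l)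
| so_sub : forall g l t, In t l -> sym_occ f n t -> sym_occ f n (Fn g l).

Definition var_occ_atom (v : nat) (a : atom) : Prop :=
  exists t, In t (args a) /\ var_occ v t.
Definition sym_occ_atom (f n : nat) (a : atom) : Prop :=
  exists t, In t (args a) /\ sym_occ f n t.

Record rule : Type := mkRule { head : atom ; pos : list atom ; neg : list atom }.

Definition subst_rule (s : nat -> term) (r : rule) : rule :=
  mkRule (subst_atom s (head r)) (map (subst_atom s) (pos r))
         (map (subst_atom s) (neg r)).

Definition rule_atom (r : rule) (a : atom) : Prop :=
  a = head r \/ In a (pos r) \/ In a (neg r).

Definition var_occ_rule (v : nat) (r : rule) : Prop :=
  exists a, rule_atom r a /\ var_occ_atom v a.

(* concept names and role names are (unary resp. binary) predicate symbols *)
Inductive concept : Type :=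
| CAtom : nat -> concept
| CTop : concept
| CBot : concept
| CNot : concept -> concept
| CAnd : concept -> concept -> concept
| COr : concept -> concept -> concept
| CEx : nat -> concept -> concept
| CAll : nat -> concept -> concept.

(* individuals are constants, i.e. 0-ary function symbols *)
Inductive axiom : Type :=
| Incl : concept -> concept -> axiom
| CAssert : concept -> nat -> axiom
| RAssert : nat -> nat -> nat -> axiom.

Record structure : Type := mkStructure {
  dom : Type ;
  dom_inh : dom ;
  fun_i : nat -> list dom -> dom ;
  pred_i : nat -> list dom -> Prop }.

Fixpoint eval (M : structure) (t : term) : dom M :=
  match t with
  | Var _ => dom_inh M   (* irrelevant: only used on ground terms *)
  | Fn f l => fun_i M f (map (eval M) l)
  end.

Definition holds (M : structure) (a : atom) : Prop :=
  pred_i M (pred a) (map (eval M) (args a)).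

(* semantics of the standard FO translation pi of ALC concepts *)
Fixpoint csem (M : structure) (C : concept) : dom M -> Prop :=
  match C with
  | CAtom A => fun x => pred_i M A [x]
  | CTop => fun _ => True
  | CBot => fun _ => False
  | CNot C => fun x => ~ csem M C x
  | CAnd C D => fun x => csem M C x /\ csem M D x
  | COr C D => fun x => csem M C x \/ csem M D x
  | CEx R C => fun x => exists y, pred_i M R [x; y] /\ csem M C y
  | CAll R C => fun x => forall y, pred_i M R [x; y] -> csem M C y
  end.

Definition sat_axiom (M : structure) (ax : axiom) : Prop :=
  match ax with
  | Incl C D => forall x, csem M C x -> csem M D x
  | CAssert C a => csem M C (fun_i M a [])
  | RAssert R a b => pred_i M R [fun_i M a []; fun_i M b []]
  end.

Record hkb : Type := mkHKB { ontology : list axiom ; program : list rule }.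

Definition models (M : structure) (O : list axiom) : Prop :=
  forall ax, In ax O -> sat_axiom M ax.

Definition entails (K : hkb) (S : atom -> Prop) (a : atom) : Prop :=
  forall M : structure, models M (ontology K) ->
    (forall b, S b -> holds M b) -> holds M a.

Definition entails_neg (K : hkb) (S : atom -> Prop) (a : atom) : Prop :=
  forall M : structure, models M (ontology K) ->
    (forall b, S b -> holds M b) -> ~ holds M a.

Definition axiom_const (ax : axiom) (c : nat) : Prop :=
  match ax with
  | Incl _ _ => False
  | CAssert _ a => c = a
  | RAssert _ a b => c = a \/ c = b
  end.

Definition sym_of (K : hkb) (f n : nat) : Prop :=
  (exists r a, In r (program K) /\ rule_atom r a /\ sym_occ_atom f n a)
  \/ (n = 0 /\ exists ax, In ax (ontology K) /\ axiom_const ax f).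

Inductive hterm (K : hkb) : term -> Prop :=
| ht_fn : forall f l, sym_of K f (length l) -> Forall (hterm K) l ->
          hterm K (Fn f l).

Definition ground_clause (K : hkb) (c : rule) : Prop :=
  exists r s, In r (program K) /\
    (forall v, var_occ_rule v r -> hterm K (s v)) /\ c = subst_rule s r.

Definition KA (K : hkb) (a : atom) : Prop :=
  exists c, ground_clause K c /\ rule_atom c a.

Record interp : Type := mkInterp { IT : atom -> Prop ; IF : atom -> Prop }.

Definition is_interp (K : hkb) (I : interp) : Prop :=
  (forall a, IT I a -> KA K a) /\ (forall a, IF I a -> KA K a) /\
  (forall a, IT I a -> IF I a -> False).

Definition subset (X Y : atom -> Prop) : Prop := forall a, X a -> Y a.

Definition ileq (I J : interp) : Prop :=
  subset (IT I) (IT J) /\ subset (IF I) (IF J).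

Definition Top (K : hkb) (I : interp) (Tr : atom -> Prop) (a : atom) : Prop :=
  KA K a /\
  ((exists c, ground_clause K c /\ head c = a /\
       (forall b, In b (pos c) -> IT I b \/ Tr b) /\
       (forall b, In b (neg c) -> IF I b))
   \/ entails K (fun b => IT I b \/ Tr b) a).

Definition Fop (K : hkb) (I : interp) (Fa : atom -> Prop) (a : atom) : Prop :=
  KA K a /\
  (entails_neg K (IT I) a \/
   (forall c, ground_clause K c -> head c = a ->
      (exists b, In b (pos c) /\ (IF I b \/ Fa b)) \/
      (exists b, In b (neg c) /\ IT I b))) /\
  ~ entails K (fun b => KA K b /\ ~ (IF I b \/ Fa b)) a.

(* Knaster-Tarski least / greatest fixpoints in the powerset lattice of U *)
Definition lfp (U : atom -> Prop) (f : (atom -> Prop) -> (atom -> Prop))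
  : atom -> Prop :=
  fun a => forall X, subset X U -> subset (f X) X -> X a.

Definition gfp (U : atom -> Prop) (f : (atom -> Prop) -> (atom -> Prop))
  : atom -> Prop :=
  fun a => exists X, subset X U /\ subset X (f X) /\ X a.

Definition IFP (K : hkb) (I : interp) : interp :=
  mkInterp (lfp (KA K) (Top K I)) (gfp (KA K) (Fop K I)).


(* Enlarging I only helps both operators: a clause body is satisfied (resp.
   refuted) by more atoms, entailment is monotone in its premises, and the
   unfoundedness side condition of F refers to the complement of I_F, which
   shrinks.  Taking lfp as the meet of prefixpoints and gfp as the join of
   postfixpoints, both fixpoints are monotone in the operator, with no need
   for the operators themselves to be monotone. *)

Lemma entails_subset (K : hkb) (S S' : atom -> Prop) (a : atom) :
  subset S S' -> entails K S a -> entails K S' a.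
Proof. intros HS E M HM HS'. apply E; auto. Qed.

Lemma entails_neg_subset (K : hkb) (S S' : atom -> Prop) (a : atom) :
  subset S S' -> entails_neg K S a -> entails_neg K S' a.
Proof. intros HS E M HM HS'. apply E; auto. Qed.

Lemma lfp_le (U : atom -> Prop) (f g : (atom -> Prop) -> atom -> Prop) :
  (forall X, subset (f X) (g X)) -> subset (lfp U f) (lfp U g).
Proof.
  intros Hfg a Ha X HXU HgX.
  apply Ha; [exact HXU |].
  intros b Hb. apply HgX, Hfg, Hb.
Qed.

Lemma gfp_le (U : atom -> Prop) (f g : (atom -> Prop) -> atom -> Prop) :
  (forall X, subset (f X) (g X)) -> subset (gfp U f) (gfp U g).
Proof.
  intros Hfg a [X [HXU [HfX Ha]]].
  exists X. split; [exact HXU | split; [| exact Ha]].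
  intros b Hb. apply Hfg, HfX, Hb.
Qed.

Lemma Top_le (K : hkb) (I I' : interp) (Tr : atom -> Prop) :
  ileq I I' -> subset (Top K I Tr) (Top K I' Tr).
Proof.
  intros [HT HF] a [HKA Ha]. split; [exact HKA |].
  destruct Ha as [[c [Hc [Hhead [Hpos Hneg]]]] | Hent].
  - left. exists c. repeat split; auto.
    intros b Hb. destruct (Hpos b Hb); auto.
  - right. revert Hent. apply entails_subset.
    intros b [HbT | HbTr]; auto.
Qed.

Lemma Fop_le (K : hkb) (I I' : interp) (Fa : atom -> Prop) :
  ileq I I' -> subset (Fop K I Fa) (Fop K I' Fa).
Proof.
  intros [HT HF] a [HKA [Hfalse Hunfounded]].
  split; [exact HKA | split].
  - destruct Hfalse as [Hent | Hclauses].
    + left. exact (entails_neg_subset _ _ _ _ HT Hent).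
    + right. intros c Hc Hhead.
      destruct (Hclauses c Hc Hhead) as [[b [Hb HbF]] | [b [Hb HbT]]].
      * left. exists b. split; [exact Hb |]. destruct HbF; auto.
      * right. exists b. auto.
  - intro Hent. apply Hunfounded. revert Hent. apply entails_subset.
    intros b [HbKA Hb]. split; [exact HbKA |].
    intros [HbF | HbFa]; apply Hb; auto.
Qed.

Theorem proposition4 : forall (K : hkb) (I I' : interp),
  is_interp K I -> is_interp K I' -> ileq I I' ->
  ileq (IFP K I) (IFP K I').
Proof.
  intros K I I' _ _ Hle. split.
  - apply lfp_le. intro Tr. apply Top_le, Hle.
  - apply gfp_le. intro Fa. apply Fop_le, Hle.
Qed.
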